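(* Let $L$ be a multisorted algebra in the positive existential signature. Then $L$ satisfies axioms (0)–(4) and (7)–(10) if and only if $L$ is isomorphic to a subalgebra of the positive existential algebra $A(W)$ of some set $W$.
   Context: Throughout, the Boolean prime ideal theorem is assumed. Signature. There is a sort $n$ for each natural number $n\ge0$. For every function $\alpha\colon\{1,\dots,n\}\to\{1,\dots,k\}$ there is a unary function symbol (''substitution'') $\alpha\colon n\to k$ (argument of sort $n$, value of sort $k$). Each sort has constants $0,1$ and binary $\vee,\wedge$. For each $n$ there is a function symbol $\exists\colon n+1\to n$ (projection). This is the positive existential signature. For substitutions $\alpha\colon k\to n$, $\beta\colon n\to m$, $\beta\circ\alpha\colon k\to m$ is the substitution symbol of the composite function; $\beta(\alpha(r))$ is composition in an algebra; $\mathrm{id}$ is the identity substitution. The associated cylindrification of $\exists\colon n+1\to n$ is the substitution $c\colon n\to n+1$, $c(i)=i$. $\exists^{(n)}$ denotes $n$-fold application of projection. Concrete algebras. For a set $W$: $\alpha^{\mathrm{tuple}}(x_1,\dots,x_k)=(x_{\alpha(1)},\dots,x_{\alpha(n)})$ and $\alpha^{\mathrm{relation}}(r)=\{\bar x\in W^k:\alpha^{\mathrm{tuple}}(\bar x)\in r\}$ for $r\subseteq W^n$. The positive existential algebra $A(W)$ interprets sort $n$ as $\mathcal P(W^n)$, $\alpha$ as $\alpha^{\mathrm{relation}}$, $0,1,\vee,\wedge$ as $\emptyset,W^n,\cup,\cap$, and $\exists(r)=\{(x_1,\dots,x_n):\exists y\,(x_1,\dots,x_n,y)\in r\}$. Partitioning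 cylindrifications: for $k_1,\dots,k_m$ and $n=\sum k_j$, the substitutions $c_i\colon k_i\to n$, $c_i(l)=l+\sum_{j<i}k_j$. $x\le y$ (also $y\ge x$) means $x=x\wedge y$. Axioms: (0) For partitioning cylindrifications $c_1,\dots,c_m$ and $r_i,s_i$ of sort $k_i$: if $\bigvee_i c_i(s_i)\ge\bigwedge_i c_i(r_i)$ then $s_i\ge r_i$ for some $i$ (including $m=0$: $0\ge1$ fails in sort $0$). (1) Each sort is a bounded distributive lattice. (2) Substitutions preserve $0,1,\vee,\wedge$. (3) $(\beta\circ\alpha)(r)=\beta(\alpha(r))$. (4) $\mathrm{id}(r)=r$. (7) $\exists(0)=0$ and $\exists(r\vee s)=\exists(r)\vee\exists(s)$. (8) $r\le c(\exists(r))$ for $r$ of sort $n+1$, with $c$ the associated cylindrification. (9) $\exists(r\wedge c(s))=\exists(r)\wedge s$ for $r$ of sort $n+1$, $s$ of sort $n$. (10) For substitutions $\alpha_i\colon k_i\to m$ ($i=1,\dots,n$), let $\beta_i\colon k_i+1\to m+n$ be given by $\beta_i(j)=\alpha_i(j)$ for $j\le k_i$ and $\beta_i(k_i+1)=m+i$ (so $\beta_i^{\mathrm{tuple}}(\bar x y_1\cdots y_n)=\alpha_i^{\mathrm{tuple}}(\bar x)y_i$). Then for all $r_i$ of sort $k_i+1$: $\exists^{(n)}\big(\bigwedge_{i=1}^n\beta_i(r_i)\big)=\bigwedge_{i=1}^n\alpha_i(\exists(r_i))$. *)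

From mathcomp Require Import all_boot.
Set Implicit Arguments. Unset Strict Implicit. Unset Printing Implicit Defensive.

(* Sorts are natural numbers n; the variables of sort n are indexed by 'I_n
   (0-based, i.e. i : 'I_n stands for the paper's i+1 in {1,...,n}).
   A substitution symbol alpha : n -> k is a function {1..n} -> {1..k},
   represented as a finite function {ffun 'I_n -> 'I_k} (so that extensionally
   equal functions give the same symbol). *)

Record peAlg := PeAlg {
  psort  : nat -> Type;
  psubst : forall n k : nat, {ffun 'I_n -> 'I_k} -> psort n -> psort k;
  pzero  : forall n, psort n;
  pone   : forall n, psort n;
  pjoin  : forall n, psort n -> psort n -> psort n;
  pmeet  : forall n, psort n -> psort n -> psort n;
  pex    : forall n, psort n.+1 -> psort n
}.

Definition snoc (W : Type) (n : nat) (x : 'I_n -> W) (y : W) : 'I_n.+1 -> W :=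
  fun i => match unlift ord_max i with Some j => x j | None => y end.

Definition A (W : Type) : peAlg :=
  @PeAlg (fun n => ('I_n -> W) -> Prop)
    (fun n k (a : {ffun 'I_n -> 'I_k}) r (x : 'I_k -> W) => r (fun i => x (a i)))
    (fun n _ => False)
    (fun n _ => True)
    (fun n r s x => r x \/ s x)
    (fun n r s x => r x /\ s x)
    (fun n r (x : 'I_n -> W) => exists y : W, r (snoc x y)).

(** Homomorphisms; "isomorphic to a subalgebra" = injective homomorphism. *)
Definition pe_hom (L M : peAlg) (h : forall n, psort L n -> psort M n) : Prop :=
  (forall n k (a : {ffun 'I_n -> 'I_k}) r,
          h k (psubst a r) = psubst a (h n r)) /\
  (forall n, h n (pzero L n) = pzero M n) /\
  (forall n, h n (pone L n) = pone M n) /\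
  (forall n r s, h n (pjoin r s) = pjoin (h n r) (h n s)) /\
  (forall n r s, h n (pmeet r s) = pmeet (h n r) (h n s)) /\
  (forall n r, h n (pex r) = pex (h n.+1 r)).

Definition embeds_in_A (L : peAlg) : Prop :=
  exists (W : Type) (h : forall n, psort L n -> psort (A W) n),
    pe_hom h /\ forall n, injective (h n).

Section Ax.
Variable L : peAlg.

Definition ple n (x y : psort L n) : Prop := x = pmeet x y.

Definition fcomp n k m (b : {ffun 'I_k -> 'I_m}) (a : {ffun 'I_n -> 'I_k})
  : {ffun 'I_n -> 'I_m} := [ffun i => b (a i)].

Definition cyl n : {ffun 'I_n -> 'I_n.+1} := [ffun i => widen_ord (leqnSn n) i].

Lemma pcyl_proof (ks : seq nat) (i : 'I_(size ks)) (l : 'I_(nth 0 ks i)) :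
  l + sumn (take i ks) < sumn ks.
Proof.
have Hl := ltn_ord l.
have E : sumn ks = sumn (take i ks) + (nth 0 ks i + sumn (drop i.+1 ks)).
  by rewrite -{1}(cat_take_drop i ks) sumn_cat (drop_nth 0 (ltn_ord i)).
rewrite E addnC ltn_add2l.
exact: leq_trans Hl (leq_addr _ _).
Qed.

Definition pcyl (ks : seq nat) (i : 'I_(size ks)) :
  {ffun 'I_(nth 0 ks i) -> 'I_(sumn ks)} :=
  [ffun l => Ordinal (pcyl_proof l)].

Fixpoint pexn (n m : nat) : psort L (n + m) -> psort L m :=
  match n return psort L (n + m) -> psort L m with
  | 0 => fun x => x
  | n'.+1 => fun x => @pexn n' m (@pex L (n' + m) x)
  end.

(* beta_i : k_i + 1 -> n + m from alpha_i : k_i -> m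
   (positions 0..m-1 are the x's, position m+i is y_i) *)
Definition beta_of (n m k : nat) (a : {ffun 'I_k -> 'I_m}) (i : 'I_n)
  : {ffun 'I_k.+1 -> 'I_(n + m)} :=
  [ffun j => match unlift ord_max j with
             | Some j' => cast_ord (addnC m n) (lshift n (a j'))
             | None => cast_ord (addnC m n) (rshift m i)
             end].

Definition pe_axioms : Prop :=
  (* (0) *)
   (forall (ks : seq nat) (r s : forall i : 'I_(size ks), psort L (nth 0 ks i)),
      ple (\big[@pmeet L (sumn ks)/pone L (sumn ks)]_(i < size ks) psubst (pcyl i) (r i))
          (\big[@pjoin L (sumn ks)/pzero L (sumn ks)]_(i < size ks) psubst (pcyl i) (s i)) ->
      exists i, ple (r i) (s i)) /\
   (* (1) bounded distributive lattices *)
   (forall n (x y z : psort L n),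
      pjoin x (pjoin y z) = pjoin (pjoin x y) z /\
      pmeet x (pmeet y z) = pmeet (pmeet x y) z /\
      pjoin x y = pjoin y x /\
      pmeet x y = pmeet y x /\
      pjoin x (pmeet x y) = x /\
      pmeet x (pjoin x y) = x /\
      pmeet x (pjoin y z) = pjoin (pmeet x y) (pmeet x z) /\
      pjoin x (pzero L n) = x /\
      pmeet x (pone L n) = x) /\
   (* (2) substitutions preserve 0,1,join,meet *)
   (forall n k (a : {ffun 'I_n -> 'I_k}) (x y : psort L n),
      [/\ psubst a (pzero L n) = pzero L k,
          psubst a (pone L n) = pone L k,
          psubst a (pjoin x y) = pjoin (psubst a x) (psubst a y) &
          psubst a (pmeet x y) = pmeet (psubst a x) (psubst a y)]) /\
   (* (3) *)
   (forall n k m (a : {ffun 'I_n -> 'I_k}) (b : {ffun 'I_k -> 'I_m}) (r : psort L n),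
      psubst (fcomp b a) r = psubst b (psubst a r)) /\
   (* (4) *)
   (forall n (r : psort L n), psubst [ffun i : 'I_n => i] r = r) /\
   (* (7) *)
   (forall n (r s : psort L n.+1),
      pex (pzero L n.+1) = pzero L n /\ pex (pjoin r s) = pjoin (pex r) (pex s)) /\
   (* (8) *)
   (forall n (r : psort L n.+1), ple r (psubst (cyl n) (pex r))) /\
   (* (9) *)
   (forall n (r : psort L n.+1) (s : psort L n),
      pex (pmeet r (psubst (cyl n) s)) = pmeet (pex r) s) /\
   (* (10) *)
   (forall (n m : nat) (k : 'I_n -> nat) (a : forall i, {ffun 'I_(k i) -> 'I_m})
           (r : forall i, psort L (k i).+1),
      pexn (\big[@pmeet L (n + m)/pone L (n + m)]_(i < n) psubst (beta_of (a i) i) (r i))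
      = \big[@pmeet L m/pone L m]_(i < n) psubst (a i) (pex (r i))).

End Ax.

From mathcomp Require Import all_boot.
From mathcomp Require Import boolp classical_sets.
From Stdlib Require List.
From Stdlib Require Import ClassicalEpsilon Eqdep_dec.
Set Implicit Arguments. Unset Strict Implicit. Unset Printing Implicit Defensive.

(* A(W) satisfies the axioms, and so does every algebra embedding into it: the equational
   axioms are reflected by injective homomorphisms, and so is (0), whose conclusion is a
   disjunction of inequalities.

   If 1 <= 0 in sort 1, then every sort n+1 is trivial
   and, by (0), sort 0 is {0 < 1}, so L embeds into A of the empty set.  Otherwise we build a
   Henkin model.  Its points are terms: a fresh tuple of constants c_p for every gap
   p = (r, s) with r not below s, and a Skolem witness for every existential statement.  A
   sentence is an element of L applied to terms; finitely many sentences entail finitely many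
   others when, placed in a common context, the meet of the former lies below the join of the
   latter.  Cut holds by distributivity, and the Henkin axioms pex r(t) -> r(t, w) are
   conservative because the deepest witness occurs nowhere else and can be eliminated using
   (9) and (10).  The sentences r(c_p) do not entail the sentences s(c_p): sending the
   constants of each gap to its own block of variables turns such an entailment into an
   instance of (0).  A maximal consistent extension (Zorn) decides every sentence, and
   r |-> {t | r(t) holds} is an injective homomorphism into A(terms). *)

Lemma eq_map_In (T U : Type) (f g : T -> U) (s : seq T) :
  (forall x, List.In x s -> f x = g x) -> map f s = map g s.
Proof. exact: List.map_ext_in. Qed.

Lemma size_filter_In_lt (T : Type) (p : pred T) (s : seq T) x :
  List.In x s -> ~~ p x -> size (filter p s) < size s.
Proof.
elim: s => [|y s IH] //= [<-|xs] px; first by rewrite (negbTE px) ltnS size_filter count_size.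
by case: (p y) => /=; [rewrite ltnS; apply: IH|apply: leq_trans (IH xs px) _].
Qed.

Lemma In_nth (T : Type) (x0 : T) (s : seq T) i : i < size s -> List.In (nth x0 s i) s.
Proof. by elim: s i => [|y s IH] [|i] //= => [_|/IH]; [left|right]. Qed.

Definition find_eq (T : Type) (s : seq T) x := find (fun y => `[< y = x >]) s.

Lemma find_eqP (T : Type) (x0 : T) (s : seq T) x :
  List.In x s -> find_eq s x < size s /\ nth x0 s (find_eq s x) = x.
Proof.
move=> xs; have hx : has (fun y => `[< y = x >]) s.
  by elim: s xs => //= y s IH [->|/IH ->]; rewrite ?orbT //; apply/orP; left; apply/asboolP.
by split; [rewrite -has_find|apply/asboolP; exact: (nth_find x0 hx)].
Qed.

Lemma snoc_lift (W : Type) n (x : 'I_n -> W) y j : snoc x y (lift ord_max j) = x j.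
Proof. by rewrite /snoc liftK. Qed.

Lemma snoc_max (W : Type) n (x : 'I_n -> W) y : snoc x y ord_max = y.
Proof. by rewrite /snoc unlift_none. Qed.

Lemma snoc_eta (W : Type) n (x : 'I_n.+1 -> W) :
  snoc (fun j => x (lift ord_max j)) (x ord_max) = x.
Proof.
by apply: funext => k; case: (unliftP ord_max k) => [j ->|->]; rewrite ?snoc_lift ?snoc_max.
Qed.

Lemma cylE n (i : 'I_n) : cyl n i = lift ord_max i.
Proof. by apply: val_inj; rewrite ffunE /= /bump leqNgt ltn_ord. Qed.

Lemma snoc_cyl (W : Type) n (x : 'I_n -> W) y : (fun i => snoc x y (cyl n i)) = x.
Proof. by apply: funext => i; rewrite cylE snoc_lift. Qed.

Lemma pcylE (ks : seq nat) (i : 'I_(size ks)) (l : 'I_(nth 0 ks i)) :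
  val (pcyl i l) = flatten_index ks i l.
Proof. by rewrite ffunE /= addnC. Qed.

Lemma pcyl_glue (W : Type) (ks : seq nat) (xs : forall i : 'I_(size ks), 'I_(nth 0 ks i) -> W) :
  exists t : 'I_(sumn ks) -> W, forall i l, t (pcyl i l) = xs i l.
Proof.
pose t p := xs (Ordinal (reshape_indexP (ltn_ord p))) (Ordinal (reshape_offsetP (ltn_ord p))).
have xs_val (i i' : 'I_(size ks)) (l : 'I_(nth 0 ks i)) (l' : 'I_(nth 0 ks i')) :
    val i = val i' -> val l = val l' -> xs i l = xs i' l'.
  case: i l => i Hi l; case: i' l' => i' Hi' l' /= ei; subst i'.
  by rewrite (bool_irrelevance Hi' Hi) => /val_inj ->.
exists t => i l; apply: xs_val => /=; rewrite pcylE.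
  exact: flatten_indexKl.
exact: flatten_indexKr.
Qed.

(** * The algebras A(W) and their subalgebras *)

Section ConcreteAlgebra.
Variable W : Type.
Local Notation AW := (A W).

Lemma A_bigmeet_seqP k (I : eqType) (r : seq I) (F : I -> psort AW k) x :
  (\big[@pmeet AW k/pone AW k]_(i <- r) F i) x <-> {in r, forall i, F i x}.
Proof.
elim: r => [|j r IH]; rewrite ?big_nil ?big_cons //=.
rewrite IH; split=> [[Fj Fr] i|Fr]; first by rewrite inE => /predU1P [->|/Fr].
by split=> [|i ir]; apply: Fr; rewrite inE ?eqxx ?ir ?orbT.
Qed.

Lemma A_bigjoin_seqP k (I : eqType) (r : seq I) (F : I -> psort AW k) x :
  (\big[@pjoin AW k/pzero AW k]_(i <- r) F i) x <-> exists2 i, i \in r & F i x.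
Proof.
elim: r => [|j r IH]; rewrite ?big_nil ?big_cons /=; first by split=> // -[].
rewrite IH; split=> [[Fj|[i ir Fi]]|[i]]; first by exists j; rewrite ?mem_head.
  by exists i; rewrite // inE ir orbT.
by rewrite inE => /predU1P [->|ir Fi]; [left|right; exists i].
Qed.

Lemma A_bigmeetP k N (F : 'I_N -> psort AW k) x :
  (\big[@pmeet AW k/pone AW k]_(i < N) F i) x <-> forall i, F i x.
Proof. by rewrite A_bigmeet_seqP; split=> Fx i => [|_]; apply: Fx; rewrite mem_index_enum. Qed.

Lemma A_bigjoinP k N (F : 'I_N -> psort AW k) x :
  (\big[@pjoin AW k/pzero AW k]_(i < N) F i) x <-> exists i, F i x.
Proof.
by rewrite A_bigjoin_seqP; split=> [[i _ Fi]|[i Fi]]; exists i.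
Qed.

Lemma cast_lshift_lift n m (j : 'I_m) :
  cast_ord (addnC m n.+1) (lshift n.+1 j) = lift ord_max (cast_ord (addnC m n) (lshift n j)).
Proof. by apply: val_inj; rewrite /= /bump leqNgt (leq_trans (ltn_ord j) (leq_addl _ _)). Qed.

Lemma A_pexnP n m (P : psort AW (n + m)) (x : 'I_m -> W) :
  pexn P x <-> exists2 z : 'I_(n + m) -> W,
     forall j, z (cast_ord (addnC m n) (lshift n j)) = x j & P z.
Proof.
elim: n P => [|n IH] P /=.
  have xE (z : 'I_m -> W) j : z (cast_ord (addnC m 0) (lshift 0 j)) = z j by congr z; apply: val_inj.
  split=> [Px|[z zx Pz]]; first by exists x.
  by have <- : z = x by apply: funext => j; rewrite -zx xE.
rewrite IH; split=> [[z zx [y Pzy]]|[z zx Pz]].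
  by exists (snoc z y) => // j; rewrite cast_lshift_lift snoc_lift.
exists (fun k => z (lift ord_max k)) => [j|]; first by rewrite -cast_lshift_lift.
by exists (z ord_max); rewrite snoc_eta.
Qed.

Lemma beta_ofE n m k (a : {ffun 'I_k -> 'I_m}) (i : 'I_n) (z : 'I_(n + m) -> W) :
  (fun j => z (beta_of a i j)) =
  snoc (fun j => z (cast_ord (addnC m n) (lshift n (a j)))) (z (cast_ord (addnC m n) (rshift m i))).
Proof.
apply: funext => j; rewrite ffunE.
by case: (unliftP ord_max j) => [j' ->|->]; rewrite ?liftK ?unlift_none ?snoc_lift ?snoc_max.
Qed.

Lemma A_ple n (r s : psort AW n) : ple r s <-> forall x, r x -> s x.
Proof.
split=> [-> x []//|rs]; apply: funext => x /=.
by apply: propext; split=> [rx|[]//]; split=> //; apply: rs.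
Qed.

Lemma A_pcyl_split (ks : seq nat) (r s : forall i : 'I_(size ks), psort AW (nth 0 ks i)) :
  ple (\big[@pmeet AW (sumn ks)/pone AW (sumn ks)]_(i < size ks) psubst (pcyl i) (r i))
      (\big[@pjoin AW (sumn ks)/pzero AW (sumn ks)]_(i < size ks) psubst (pcyl i) (s i)) ->
  exists i, ple (r i) (s i).
Proof.
move/A_ple=> rs; apply: contrapT => /forallNP nrs.
have sep_pt i : exists x, r i x /\ ~ s i x.
  apply: contrapT => nx; apply: (nrs i); apply/A_ple => x rx.
  by apply: contrapT => sx; apply: nx; exists x.
pose xs i := proj1_sig (cid (sep_pt i)).
have xsP i : r i (xs i) /\ ~ s i (xs i) := proj2_sig (cid (sep_pt i)).
have [t tE] := pcyl_glue xs.
have tcyl i : (fun l => t (pcyl i l)) = xs i by apply: funext => l; rewrite tE.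
have /A_bigjoinP [i] : (\big[@pjoin AW _/pzero AW _]_(i < size ks) psubst (pcyl i) (s i)) t.
  by apply/rs/A_bigmeetP => i /=; rewrite tcyl; case: (xsP i).
by rewrite /= tcyl; case: (xsP i).
Qed.

Lemma A_pexn_beta (n m : nat) (k : 'I_n -> nat) (a : forall i, {ffun 'I_(k i) -> 'I_m})
    (r : forall i, psort AW (k i).+1) :
  pexn (\big[@pmeet AW (n + m)/pone AW (n + m)]_(i < n) psubst (beta_of (a i) i) (r i))
  = \big[@pmeet AW m/pone AW m]_(i < n) psubst (a i) (pex (r i)).
Proof.
apply: funext => x; apply: propext; rewrite A_pexnP A_bigmeetP.
split=> [[z zx /A_bigmeetP rz] i|rx].
  have := rz i; rewrite /= beta_ofE; set y := z _ => rzy; exists y.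
  by congr (r i (snoc _ y)): rzy; apply: funext => j; rewrite zx.
have [ys ysP] := boolp.choice (P := fun i y => r i (snoc (fun j => x (a i j)) y)) rx.
pose z k := match split (cast_ord (addnC n m) k) with inl j => x j | inr i => ys i end.
have zl j : z (cast_ord (addnC m n) (lshift n j)) = x j.
  by rewrite /z (_ : cast_ord _ _ = lshift n j) ?(unsplitK (inl _)) //; apply: val_inj.
have zr i : z (cast_ord (addnC m n) (rshift m i)) = ys i.
  by rewrite /z (_ : cast_ord _ _ = rshift m i) ?(unsplitK (inr _)) //; apply: val_inj.
exists z => //; apply/A_bigmeetP => i /=; rewrite beta_ofE zr.
by congr (r i (snoc _ _)): (ysP i); apply: funext => j; rewrite zl.
Qed.

Lemma A_pe_axioms : pe_axioms AW.
Proof.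
split; first exact: A_pcyl_split.
split; first by move=> n x y z; do !split; apply: funext => t; apply: propext => /=; tauto.
split; first by move=> n k a x y; split.
split; first by move=> n k m a b r; apply: funext => t /=; congr r; apply: funext => i; rewrite ffunE.
split; first by move=> n r; apply: funext => t /=; congr r; apply: funext => i; rewrite ffunE.
split.
  move=> n r s; split; apply: funext => t; apply: propext => /=; first by split=> [[_ []]|[]].
  by split=> [[y [?|?]]|[[y ?]|[y ?]]]; [left|right|..]; exists y; [..|left|right].
split.
  move=> n r; apply/A_ple => t rt /=; exists (t ord_max).
  suff -> : snoc (fun i => t (cyl n i)) (t ord_max) = t by [].
  by rewrite -[RHS]snoc_eta; congr snoc; apply: funext => i; rewrite cylE.
split; last exact: A_pexn_beta.
move=> n r s; apply: funext => t; apply: propext => /=.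
split=> [[y [ry]]|[[y ry] st]]; last by exists y; rewrite snoc_cyl.
by rewrite snoc_cyl; split=> //; exists y.
Qed.

End ConcreteAlgebra.

Section Embedding.
Variables (L M : peAlg) (h : forall n, psort L n -> psort M n).
Hypotheses (hom_h : pe_hom h) (inj_h : forall n, injective (@h n)).

Lemma hom_subst n k (a : {ffun 'I_n -> 'I_k}) r : h (psubst a r) = psubst a (h r).
Proof. by case: hom_h. Qed.
Lemma hom_zero n : h (pzero L n) = pzero M n.
Proof. by case: hom_h => _ []. Qed.
Lemma hom_one n : h (pone L n) = pone M n.
Proof. by case: hom_h => _ [_ []]. Qed.
Lemma hom_join n (r s : psort L n) : h (pjoin r s) = pjoin (h r) (h s).
Proof. by case: hom_h => _ [_ [_ []]]. Qed.
Lemma hom_meet n (r s : psort L n) : h (pmeet r s) = pmeet (h r) (h s).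
Proof. by case: hom_h => _ [_ [_ [_ []]]]. Qed.
Lemma hom_ex n (r : psort L n.+1) : h (pex r) = pex (h r).
Proof. by case: hom_h => _ [_ [_ [_ []]]]. Qed.

Lemma hom_pexn n m z : h (@pexn L n m z) = pexn (h z).
Proof. by elim: n z => [|n IH] z //=; rewrite IH hom_ex. Qed.

Lemma hom_bigmeet k N (F : 'I_N -> psort L k) :
  h (\big[@pmeet L k/pone L k]_(i < N) F i) = \big[@pmeet M k/pone M k]_(i < N) h (F i).
Proof. exact: (big_morph (@h k) (@hom_meet k) (hom_one k)). Qed.

Lemma hom_bigjoin k N (F : 'I_N -> psort L k) :
  h (\big[@pjoin L k/pzero L k]_(i < N) F i) = \big[@pjoin M k/pzero M k]_(i < N) h (F i).
Proof. exact: (big_morph (@h k) (@hom_join k) (hom_zero k)). Qed.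

Lemma ple_hom n (x y : psort L n) : ple (h x) (h y) <-> ple x y.
Proof. by rewrite /ple -hom_meet; split=> [/inj_h|<-]. Qed.

Lemma pe_axioms_embedding : pe_axioms M -> pe_axioms L.
Proof.
case=> ax0 [ax1 [ax2 [ax3 [ax4 [ax7 [ax8 [ax9 ax10]]]]]]].
split.
  move=> ks r s /ple_hom; rewrite hom_bigmeet hom_bigjoin.
  rewrite !(eq_bigr _ (fun i _ => hom_subst (pcyl i) _)).
  by case/ax0=> i /ple_hom; exists i.
split.
  move=> n x y z; have := ax1 n (h x) (h y) (h z).
  rewrite -hom_zero -hom_one -!hom_join -!hom_meet -!hom_join => eqs.
  by do !split; apply: inj_h; tauto.
split.
  move=> n k a x y; have [? ? ? ?] := ax2 n k a (h x) (h y).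
  by split; apply: inj_h; rewrite ?hom_subst ?hom_zero ?hom_one ?hom_join ?hom_meet ?hom_subst.
split.
  by move=> n k m a b r; apply: inj_h; rewrite !hom_subst ax3.
split.
  by move=> n r; apply: inj_h; rewrite hom_subst ax4.
split.
  move=> n r s; have [? ?] := ax7 n (h r) (h s).
  by split; apply: inj_h; rewrite ?hom_ex ?hom_zero ?hom_join ?hom_ex.
split.
  by move=> n r; apply/ple_hom; rewrite hom_subst hom_ex; apply: ax8.
split.
  by move=> n r s; apply: inj_h; rewrite hom_ex !hom_meet hom_subst hom_ex ax9.
move=> n m k a r; apply: inj_h; rewrite hom_pexn !hom_bigmeet.
under eq_bigr do rewrite hom_subst; rewrite ax10.
by apply: eq_bigr => i _; rewrite hom_subst hom_ex.
Qed.

End Embedding.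

(** * Consequences of the axioms *)

Section Completeness.
Variable L : peAlg.
Hypothesis HL : pe_axioms L.

Local Notation S := (psort L).
Local Notation "x <=L y" := (ple x y) (at level 70).

Let lattice_axioms n (x y z : S n) := proj1 (proj2 HL) n x y z.

Lemma pjoinA n (x y z : S n) : pjoin x (pjoin y z) = pjoin (pjoin x y) z.
Proof. by case: (lattice_axioms x y z). Qed.
Lemma pmeetA n (x y z : S n) : pmeet x (pmeet y z) = pmeet (pmeet x y) z.
Proof. by case: (lattice_axioms x y z) => _ []. Qed.
Lemma pjoinC n (x y : S n) : pjoin x y = pjoin y x.
Proof. by case: (lattice_axioms x y x) => _ [_ []]. Qed.
Lemma pmeetC n (x y : S n) : pmeet x y = pmeet y x.
Proof. by case: (lattice_axioms x y x) => _ [_ [_ []]]. Qed.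
Lemma pjoinKI n (x y : S n) : pjoin x (pmeet x y) = x.
Proof. by case: (lattice_axioms x y x) => _ [_ [_ [_ []]]]. Qed.
Lemma pmeetKU n (x y : S n) : pmeet x (pjoin x y) = x.
Proof. by case: (lattice_axioms x y x) => _ [_ [_ [_ [_ []]]]]. Qed.
Lemma pmeetUr n (x y z : S n) : pmeet x (pjoin y z) = pjoin (pmeet x y) (pmeet x z).
Proof. by case: (lattice_axioms x y z) => _ [_ [_ [_ [_ [_ []]]]]]. Qed.
Lemma pjoinx0 n (x : S n) : pjoin x (pzero L n) = x.
Proof. by case: (lattice_axioms x x x) => _ [_ [_ [_ [_ [_ [_ []]]]]]]. Qed.
Lemma pmeetx1 n (x : S n) : pmeet x (pone L n) = x.
Proof. by case: (lattice_axioms x x x) => _ [_ [_ [_ [_ [_ [_ []]]]]]]. Qed.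

Lemma pmeetxx n (x : S n) : pmeet x x = x.
Proof. by rewrite -{2}(pjoinKI x x) pmeetKU. Qed.
Lemma pjoinxx n (x : S n) : pjoin x x = x.
Proof. by rewrite -{2}(pmeetKU x x) pjoinKI. Qed.

Lemma ple_refl n (x : S n) : x <=L x.
Proof. by rewrite /ple pmeetxx. Qed.
Lemma ple_trans n (y x z : S n) : x <=L y -> y <=L z -> x <=L z.
Proof. by rewrite /ple => xy yz; rewrite {1}xy {1}yz pmeetA -xy. Qed.
Lemma ple_anti n (x y : S n) : x <=L y -> y <=L x -> x = y.
Proof. by rewrite /ple => xy yx; rewrite xy yx pmeetC -yx. Qed.
Lemma pleEjoin n (x y : S n) : x <=L y <-> pjoin x y = y.
Proof. by rewrite /ple; split=> [->|<-]; rewrite ?pmeetKU // pjoinC pmeetC pjoinKI. Qed.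

Lemma pleIl n (x y : S n) : pmeet x y <=L x.
Proof. by rewrite /ple [in RHS]pmeetC pmeetA pmeetxx. Qed.
Lemma pleIr n (x y : S n) : pmeet x y <=L y.
Proof. by rewrite pmeetC; apply: pleIl. Qed.
Lemma plexI n (x y z : S n) : x <=L y -> x <=L z -> x <=L pmeet y z.
Proof. by rewrite /ple => xy xz; rewrite pmeetA -xy. Qed.
Lemma pleUl n (x y : S n) : x <=L pjoin x y.
Proof. by rewrite /ple pmeetKU. Qed.
Lemma pleUr n (x y : S n) : y <=L pjoin x y.
Proof. by rewrite pjoinC; apply: pleUl. Qed.
Lemma pleUx n (x y z : S n) : x <=L z -> y <=L z -> pjoin x y <=L z.
Proof. by move=> /pleEjoin xz /pleEjoin yz; apply/pleEjoin; rewrite -pjoinA yz xz. Qed.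
Lemma plex1 n (x : S n) : x <=L pone L n.
Proof. by rewrite /ple pmeetx1. Qed.
Lemma ple0x n (x : S n) : pzero L n <=L x.
Proof. by apply/pleEjoin; rewrite pjoinC pjoinx0. Qed.
Lemma pleI2 n (x y x' y' : S n) : x <=L x' -> y <=L y' -> pmeet x y <=L pmeet x' y'.
Proof.
by move=> xx' yy'; apply: plexI; [apply: ple_trans (pleIl _ _) xx'|apply: ple_trans (pleIr _ _) yy'].
Qed.

Lemma ple_cut n (a b c d f : S n) :
  pmeet a f <=L b -> c <=L pjoin d f -> pmeet a c <=L pjoin b d.
Proof.
move=> afb cdf; apply: ple_trans (pleI2 (ple_refl a) cdf) _; rewrite pmeetUr.
apply: pleUx; first exact: ple_trans (pleIr _ _) (pleUr _ _).
exact: ple_trans afb (pleUl _ _).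
Qed.

Lemma psubst0 n k (a : {ffun 'I_n -> 'I_k}) : psubst a (pzero L n) = pzero L k.
Proof. by case: (proj1 (proj2 (proj2 HL)) n k a (pone L n) (pone L n)). Qed.
Lemma psubst1 n k (a : {ffun 'I_n -> 'I_k}) : psubst a (pone L n) = pone L k.
Proof. by case: (proj1 (proj2 (proj2 HL)) n k a (pone L n) (pone L n)). Qed.
Lemma psubstU n k (a : {ffun 'I_n -> 'I_k}) (x y : S n) :
  psubst a (pjoin x y) = pjoin (psubst a x) (psubst a y).
Proof. by case: (proj1 (proj2 (proj2 HL)) n k a x y). Qed.
Lemma psubstI n k (a : {ffun 'I_n -> 'I_k}) (x y : S n) :
  psubst a (pmeet x y) = pmeet (psubst a x) (psubst a y).
Proof. by case: (proj1 (proj2 (proj2 HL)) n k a x y). Qed.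
Lemma psubst_ple n k (a : {ffun 'I_n -> 'I_k}) (x y : S n) : x <=L y -> psubst a x <=L psubst a y.
Proof. by rewrite /ple => xy; rewrite -psubstI -xy. Qed.

Lemma psubst_comp n k m (a : 'I_n -> 'I_k) (b : 'I_k -> 'I_m) (r : S n) :
  psubst (finfun (fun i => b (a i))) r = psubst (finfun b) (psubst (finfun a) r).
Proof.
rewrite -(proj1 (proj2 (proj2 (proj2 HL)))); congr psubst.
by apply/ffunP => i; rewrite !ffunE.
Qed.

Lemma psubst_id n (a : 'I_n -> 'I_n) (r : S n) : a =1 id -> psubst (finfun a) r = r.
Proof.
move=> aid; rewrite -[RHS](proj1 (proj2 (proj2 (proj2 (proj2 HL)))) n r); congr psubst.
by apply/ffunP => i; rewrite !ffunE aid.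
Qed.

Let ex_axioms := proj2 (proj2 (proj2 (proj2 (proj2 HL)))).

Lemma pex0 n : pex (pzero L n.+1) = pzero L n.
Proof. by case: (proj1 ex_axioms n (pzero L _) (pzero L _)). Qed.
Lemma pexU n (r s : S n.+1) : pex (pjoin r s) = pjoin (pex r) (pex s).
Proof. by case: (proj1 ex_axioms n r s). Qed.
Lemma pex_ple n (r s : S n.+1) : r <=L s -> pex r <=L pex s.
Proof. by move=> /pleEjoin rs; apply/pleEjoin; rewrite -pexU rs. Qed.
Lemma ple_cyl_pex n (r : S n.+1) : r <=L psubst (cyl n) (pex r).
Proof. exact: (proj1 (proj2 ex_axioms)). Qed.
Lemma pexI_cyl n (r : S n.+1) (s : S n) : pex (pmeet r (psubst (cyl n) s)) = pmeet (pex r) s.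
Proof. exact: (proj1 (proj2 (proj2 ex_axioms))). Qed.
Lemma pex_cyl_ple n (s : S n) : pex (psubst (cyl n) s) <=L s.
Proof. by have := pexI_cyl (pone L n.+1) s; rewrite pmeetC pmeetx1 => ->; apply: pleIr. Qed.

Lemma pex_subst m k (a : {ffun 'I_k -> 'I_m}) (r : S k.+1) :
  pex (psubst (@beta_of 1 m k a ord0) r) = psubst a (pex r).
Proof.
have := proj2 (proj2 (proj2 ex_axioms)) 1 m (fun _ => k) (fun _ => a) (fun _ => r).
by rewrite !big_ord_recl !big_ord0 /= !pmeetx1.
Qed.

Lemma pcyl_split (ks : seq nat) (r s : forall i : 'I_(size ks), S (nth 0 ks i)) :
  \big[@pmeet L _/pone L _]_(i < size ks) psubst (pcyl i) (r i) <=L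
  \big[@pjoin L _/pzero L _]_(i < size ks) psubst (pcyl i) (s i) ->
  exists i, r i <=L s i.
Proof. exact: (proj1 HL). Qed.

Lemma bigmeet_ple k N (F : 'I_N -> S k) i : \big[@pmeet L k/pone L k]_(j < N) F j <=L F i.
Proof.
elim: (index_enum _) (mem_index_enum i) => [//|j r IH]; rewrite inE big_cons.
by case/predU1P=> [->|/IH]; [apply: pleIl|apply: ple_trans; apply: pleIr].
Qed.

Lemma ple_bigjoin k N (F : 'I_N -> S k) i : F i <=L \big[@pjoin L k/pzero L k]_(j < N) F j.
Proof.
elim: (index_enum _) (mem_index_enum i) => [//|j r IH]; rewrite inE big_cons.
by case/predU1P=> [->|/IH]; [apply: pleUl|move/ple_trans; apply; apply: pleUr].
Qed.

Definition meetl n (s : seq (S n)) := foldr (@pmeet L n) (pone L n) s.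
Definition joinl n (s : seq (S n)) := foldr (@pjoin L n) (pzero L n) s.

Lemma meetl_cat n (s1 s2 : seq (S n)) : meetl (s1 ++ s2) = pmeet (meetl s1) (meetl s2).
Proof. by elim: s1 => [|y s IH] /=; [rewrite pmeetC pmeetx1|rewrite IH pmeetA]. Qed.
Lemma joinl_cat n (s1 s2 : seq (S n)) : joinl (s1 ++ s2) = pjoin (joinl s1) (joinl s2).
Proof. by elim: s1 => [|y s IH] /=; [rewrite pjoinC pjoinx0|rewrite IH pjoinA]. Qed.

Lemma psubst_meetl n k (a : {ffun 'I_n -> 'I_k}) s : psubst a (meetl s) = meetl (map (psubst a) s).
Proof. by elim: s => [|x s IH] /=; rewrite ?psubst1 // psubstI IH. Qed.
Lemma psubst_joinl n k (a : {ffun 'I_n -> 'I_k}) s : psubst a (joinl s) = joinl (map (psubst a) s).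
Proof. by elim: s => [|x s IH] /=; rewrite ?psubst0 // psubstU IH. Qed.

Lemma meetl_ple n (s : seq (S n)) y : List.In y s -> meetl s <=L y.
Proof.
elim: s => [|x s IH] //= [<-|/IH]; first exact: pleIl.
exact: ple_trans (pleIr _ _).
Qed.
Lemma ple_joinl n (s : seq (S n)) y : List.In y s -> y <=L joinl s.
Proof.
elim: s => [|x s IH] //= [<-|/IH]; first exact: pleUl.
by move/ple_trans; apply; apply: pleUr.
Qed.
Lemma plex_meetl n (s : seq (S n)) x : (forall y, List.In y s -> x <=L y) -> x <=L meetl s.
Proof.
elim: s => [|y s IH] xs /=; first exact: plex1.
by apply: plexI; [apply: xs; left|apply: IH => y' ?; apply: xs; right].
Qed.
Lemma pjoinl_lex n (s : seq (S n)) x : (forall y, List.In y s -> y <=L x) -> joinl s <=L x.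
Proof.
elim: s => [|y s IH] sx /=; first exact: ple0x.
by apply: pleUx; [apply: sx; left|apply: IH => y' ?; apply: sx; right].
Qed.

Lemma meetl_extend_ple n (s1 s2 : seq (S n)) f :
  (forall y, List.In y s1 -> List.In y s2 \/ y = f) -> pmeet (meetl s2) f <=L meetl s1.
Proof.
move=> s12; apply: plex_meetl => y /s12 [/meetl_ple|->]; last exact: pleIr.
exact: ple_trans (pleIl _ _).
Qed.
Lemma ple_joinl_extend n (s1 s2 : seq (S n)) f :
  (forall y, List.In y s1 -> List.In y s2 \/ y = f) -> joinl s1 <=L pjoin (joinl s2) f.
Proof.
move=> s12; apply: pjoinl_lex => y /s12 [/ple_joinl|->]; last exact: pleUr.
by move/ple_trans; apply; apply: pleUl.
Qed.

Lemma pex_ple_cyl n (b : S n.+1) (c d : S n) :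
  pmeet b (psubst (cyl n) c) <=L psubst (cyl n) d -> pmeet (pex b) c <=L d.
Proof. by rewrite -pexI_cyl => /pex_ple/ple_trans; apply; apply: pex_cyl_ple. Qed.

Local Open Scope classical_set_scope.

(** * Henkin terms, sentences and entailment *)

Record gap := Gap { gap_n : nat; gap_r : S gap_n; gap_s : S gap_n }.

(* [tconst p j] is the j-th Henkin constant of the gap [p]; [tskolem r t] witnesses [pex r] at [t]. *)
Inductive term :=
  | tconst of gap & nat
  | tskolem n of S n.+1 & ('I_n -> term).

Record sent := Sent { sent_n : nat; sent_r : S sent_n; sent_t : 'I_sent_n -> term }.
Arguments sent_t : clear implicits.

Record atom m := Atom { atom_n : nat; atom_r : S atom_n; atom_v : 'I_atom_n -> 'I_m }.
Arguments atom_v {m} _ _.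

Definition atom_val m (p : atom m) : S m := psubst (finfun (atom_v p)) (atom_r p).

Definition atom_sent m (z : 'I_m -> term) (p : atom m) : sent :=
  Sent (atom_r p) (fun i => z (atom_v p i)).

Definition rename m m' (s : 'I_m -> 'I_m') (p : atom m) : atom m' :=
  Atom (atom_r p) (fun i => s (atom_v p i)).

Lemma atom_val_rename m m' (s : 'I_m -> 'I_m') (p : atom m) :
  atom_val (rename s p) = psubst (finfun s) (atom_val p).
Proof. exact: psubst_comp. Qed.

Lemma atom_sent_rename m m' (s : 'I_m -> 'I_m') z z' (p : atom m) :
  (forall j, z' (s j) = z j) -> atom_sent z' (rename s p) = atom_sent z p.
Proof. by move=> zs; rewrite /atom_sent /=; congr Sent; apply: funext => i. Qed.

Lemma rename_ple m m' (s : 'I_m -> 'I_m') (gs ds : seq (atom m)) :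
  meetl (map (@atom_val m) gs) <=L joinl (map (@atom_val m) ds) ->
  meetl (map (@atom_val m') (map (rename s) gs)) <=L joinl (map (@atom_val m') (map (rename s) ds)).
Proof.
have valE l : map (@atom_val m') (map (rename s) l) = map (psubst (finfun s)) (map (@atom_val m) l).
  by rewrite -!map_comp; apply: eq_map => p /=; rewrite atom_val_rename.
by rewrite !valE -psubst_meetl -psubst_joinl; apply: psubst_ple.
Qed.

Lemma atom_sentP m (z : 'I_m -> term) (p : atom m) n (r : S n) (x : 'I_n -> term) :
  atom_sent z p = Sent r x -> exists2 a, p = Atom r a & forall i, z (a i) = x i.
Proof.
case: p => np rp a /= e; have en : np = n := f_equal sent_n e; subst np.
have pair_inj := Eqdep_dec.inj_pair2_eq_dec _ PeanoNat.Nat.eq_dec.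
have /(pair_inj S) /= -> := f_equal (fun f => existT S _ (sent_r f)) e.
have /(pair_inj (fun k => 'I_k -> term)) /= ex :=
  f_equal (fun f => existT (fun k => 'I_k -> term) _ (sent_t f)) e.
by exists a => // i; rewrite -ex.
Qed.

Definition entails (G D : set sent) :=
  exists m (z : 'I_m -> term) (gs ds : seq (atom m)),
    [/\ forall p, List.In p gs -> G (atom_sent z p),
        forall p, List.In p ds -> D (atom_sent z p) &
        meetl (map (@atom_val m) gs) <=L joinl (map (@atom_val m) ds)].

Lemma entails_mono (G D G' D' : set sent) :
  G `<=` G' -> D `<=` D' -> entails G D -> entails G' D'.
Proof.
move=> GG' DD' [m [z [gs [ds [hG hD le]]]]].
by exists m, z, gs, ds; split=> // p ?; [apply/GG'/hG|apply/DD'/hD].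
Qed.

Lemma entails_atoms m (z : 'I_m -> term) (gs ds : seq (atom m)) :
  meetl (map (@atom_val m) gs) <=L joinl (map (@atom_val m) ds) ->
  entails [set f | List.In f (map (atom_sent z) gs)] [set f | List.In f (map (atom_sent z) ds)].
Proof. by move=> le; exists m, z, gs, ds; split=> // p; apply: List.in_map. Qed.

Definition atom_id n (r : S n) : atom n := Atom r id.

Lemma atom_val_id n (r : S n) : atom_val (atom_id r) = r.
Proof. exact: psubst_id. Qed.

Lemma entails_refl (f : sent) : entails [set f] [set f].
Proof.
case: f => n r x.
have le : meetl (map (@atom_val n) [:: atom_id r]) <=L joinl (map (@atom_val n) [:: atom_id r]).
  by rewrite /= atom_val_id pmeetx1 pjoinx0; apply: ple_refl.
by apply: entails_mono (entails_atoms x le) => f [<-|[]].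
Qed.

(* Renaming through [canon z] identifies the variables of a context carrying the same term. *)
Definition canon m (z : 'I_m -> term) (j : 'I_m) : 'I_m :=
  epsilon (inhabits j) (fun k => z k = z j).

Lemma canonE m (z : 'I_m -> term) j : z (canon z j) = z j.
Proof. by apply: (epsilon_spec (inhabits j) (fun k => z k = z j)); exists j. Qed.

Lemma canon_eq m (z : 'I_m -> term) j j' : z j = z j' -> canon z j = canon z j'.
Proof. by rewrite /canon => ->; congr epsilon; apply: Prop_irrelevance. Qed.

Lemma canon_psubst m k (z : 'I_m -> term) (u v : 'I_k -> 'I_m) (r : S k) :
  (forall i, z (u i) = z (v i)) ->
  psubst (finfun (fun i => canon z (u i))) r = psubst (finfun (fun i => canon z (v i))) r.
Proof. by move=> zuv; congr psubst; apply/ffunP => i; rewrite !ffunE (canon_eq (zuv i)). Qed.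

Definition catf (T : Type) m1 m2 (z1 : 'I_m1 -> T) (z2 : 'I_m2 -> T) (i : 'I_(m1 + m2)) : T :=
  match split i with inl a => z1 a | inr b => z2 b end.

Lemma catf_l (T : Type) m1 m2 (z1 : 'I_m1 -> T) (z2 : 'I_m2 -> T) a : catf z1 z2 (lshift m2 a) = z1 a.
Proof. by rewrite /catf (unsplitK (inl _)). Qed.
Lemma catf_r (T : Type) m1 m2 (z1 : 'I_m1 -> T) (z2 : 'I_m2 -> T) b : catf z1 z2 (rshift m1 b) = z2 b.
Proof. by rewrite /catf (unsplitK (inr _)). Qed.

Lemma entails_cut (G D : set sent) (f : sent) :
  entails (G `|` [set f]) D -> entails G (D `|` [set f]) -> entails G D.
Proof.
case: f => n r x [m1 [z1 [gs1 [ds1 [hG1 hD1 le1]]]]] [m2 [z2 [gs2 [ds2 [hG2 hD2 le2]]]]].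
pose z := catf z1 (catf z2 x).
pose s1 a := canon z (lshift (m2 + n) a).
pose s2 b := canon z (rshift m1 (lshift n b)).
have zs1 a : z (s1 a) = z1 a by rewrite canonE /z catf_l.
have zs2 b : z (s2 b) = z2 b by rewrite canonE /z catf_r catf_l.
pose cutval := psubst (finfun (fun j => canon z (rshift m1 (rshift m2 j)))) r.
have val1 p : atom_sent z1 p = Sent r x -> atom_val (rename s1 p) = cutval.
  by case/atom_sentP=> a -> ax; apply: canon_psubst => i; rewrite /z catf_l !catf_r ax.
have val2 p : atom_sent z2 p = Sent r x -> atom_val (rename s2 p) = cutval.
  by case/atom_sentP=> a -> ax; apply: canon_psubst => i; rewrite /z !catf_r catf_l ax.
pose gs := [seq p <- map (rename s1) gs1 | `[< G (atom_sent z p) >]] ++ map (rename s2) gs2.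
pose ds := map (rename s1) ds1 ++ [seq p <- map (rename s2) ds2 | `[< D (atom_sent z p) >]].
exists (m1 + (m2 + n)), z, gs, ds; split.
- move=> p /List.in_app_iff [/List.filter_In [_ /asboolP]//|/List.in_map_iff [q [<- /hG2]]].
  by rewrite (atom_sent_rename _ zs2).
- move=> p /List.in_app_iff [/List.in_map_iff [q [<- /hD1]]|/List.filter_In [_ /asboolP]//].
  by rewrite (atom_sent_rename _ zs1).
rewrite !map_cat meetl_cat joinl_cat; apply: (@ple_cut _ _ _ _ _ cutval).
  apply: ple_trans (rename_ple s1 le1); apply: meetl_extend_ple => y.
  move=> /List.in_map_iff [_ [<- /List.in_map_iff [q [<- q1]]]].
  have [Gq|/val1] := hG1 q q1; last by right.
  left; apply: List.in_map; apply/List.filter_In; split; first exact: List.in_map.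
  by apply/asboolP; rewrite (atom_sent_rename _ zs1).
apply: ple_trans (rename_ple s2 le2) _; apply: ple_joinl_extend => y.
move=> /List.in_map_iff [_ [<- /List.in_map_iff [q [<- q2]]]].
have [Dq|/val2] := hD2 q q2; last by right.
left; apply: List.in_map; apply/List.filter_In; split; first exact: List.in_map.
by apply/asboolP; rewrite (atom_sent_rename _ zs2).
Qed.

Lemma ffun_cyl n : finfun (fun i => cyl n i) = cyl n.
Proof. by apply/ffunP => i; rewrite ffunE. Qed.

Section ExistsElim.
Variables (m n : nat) (z : 'I_m -> term) (t : 'I_n -> term) (c : term).

(* The context [z] extended by [t]; the variables carrying [c] are sent to the new innermost
   variable, which [pex] then binds. *)
Definition keep_var (j : 'I_m) : 'I_(m + n) := canon (catf z t) (lshift n j).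
Definition arg_var (k : 'I_n) : 'I_(m + n) := canon (catf z t) (rshift m k).
Definition elim_var (j : 'I_m) : 'I_(m + n).+1 :=
  if `[< z j = c >] then ord_max else cyl _ (keep_var j).

Lemma keep_varE j : catf z t (keep_var j) = z j.
Proof. by rewrite canonE catf_l. Qed.

Lemma arg_varE k : catf z t (arg_var k) = t k.
Proof. by rewrite canonE catf_r. Qed.

Lemma elim_var_fresh (p : atom m) : (forall j, sent_t (atom_sent z p) j <> c) ->
  atom_val (rename elim_var p) = psubst (cyl (m + n)) (atom_val (rename keep_var p)).
Proof.
move=> pc; rewrite /atom_val /= -ffun_cyl -psubst_comp; congr psubst.
by apply/ffunP => i; rewrite !ffunE /elim_var; case: asboolP => [/(pc i)[]|_]; rewrite ffunE.
Qed.

Lemma elim_var_witness (r : S n.+1) (p : atom m) : (forall k, t k <> c) ->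
  atom_sent z p = Sent r (snoc t c) ->
  atom_val (rename elim_var p) = psubst (@beta_of 1 (m + n) n (finfun arg_var) ord0) r.
Proof.
move=> tc /atom_sentP [v -> zv]; rewrite /atom_val /=; congr psubst.
apply/ffunP => k; rewrite !ffunE /elim_var.
case: (unliftP ord_max k) => [k' ->|->]; rewrite zv ?snoc_lift ?snoc_max.
  case: asboolP => [/tc []|_]; apply: ord_inj; rewrite !ffunE /=.
  by congr val; apply: canon_eq; rewrite catf_l catf_r zv snoc_lift.
by case: asboolP => [_|[]] //; apply: ord_inj; rewrite /= addn0.
Qed.

End ExistsElim.

Lemma entails_pex_elim (G D : set sent) n (r : S n.+1) (t : 'I_n -> term) (c : term) :
  (forall j, t j <> c) ->
  (forall f, G f -> forall j, sent_t f j <> c) ->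
  (forall f, D f -> forall j, sent_t f j <> c) ->
  entails (G `|` [set Sent r (snoc t c)]) D -> entails (G `|` [set Sent (pex r) t]) D.
Proof.
move=> tc Gc Dc [m [z [gs [ds [hG hD le]]]]].
pose s := elim_var z t c; pose s' := keep_var z t.
pose gc := [seq p <- gs | `[< G (atom_sent z p) >]].
pose cval := meetl (map (@atom_val _) (map (rename s') gc)).
pose dval := joinl (map (@atom_val _) (map (rename s') ds)).
have dvalE : joinl (map (@atom_val _) (map (rename s) ds)) = psubst (cyl _) dval.
  rewrite psubst_joinl -!map_comp; congr joinl; apply: eq_map_In => p /hD /Dc /elim_var_fresh.
  by rewrite /= => ->.
have cvalE : pmeet (psubst (@beta_of 1 _ n (finfun (arg_var z t)) ord0) r) (psubst (cyl _) cval)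
             <=L meetl (map (@atom_val _) (map (rename s) gs)).
  rewrite pmeetC psubst_meetl; apply: meetl_extend_ple => y.
  move=> /List.in_map_iff [_ [<- /List.in_map_iff [q [<- qgs]]]].
  have [Gq|/(elim_var_witness tc)] := hG q qgs; last by right.
  left; rewrite elim_var_fresh; last exact: Gc Gq.
  by do 3 apply: List.in_map; apply/List.filter_In; split; last apply/asboolP.
have le' : pmeet (psubst (finfun (arg_var z t)) (pex r)) cval <=L dval.
  rewrite -pex_subst; apply: pex_ple_cyl; rewrite -dvalE.
  exact: ple_trans cvalE (rename_ple s le).
exists (m + n), (catf z t), (Atom (pex r) (arg_var z t) :: map (rename s') gc), (map (rename s') ds).
split=> //.
- move=> p [<-|/List.in_map_iff [q [<- /List.filter_In [_ /asboolP Gq]]]].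
    by right; congr Sent; apply: funext => k; rewrite arg_varE.
  by left; rewrite (atom_sent_rename _ (keep_varE z t)).
- by move=> p /List.in_map_iff [q [<- /hD]]; rewrite (atom_sent_rename _ (keep_varE z t)).
Qed.

(** * Henkin axioms *)

Record inst := Inst { inst_n : nat; inst_r : S inst_n.+1; inst_t : 'I_inst_n -> term }.
Arguments inst_t : clear implicits.

Definition witness (i : inst) : term := tskolem (inst_r i) (inst_t i).
Definition henkin_prem (i : inst) : sent := Sent (pex (inst_r i)) (inst_t i).
Definition henkin_concl (i : inst) : sent := Sent (inst_r i) (snoc (inst_t i) (witness i)).

Lemma witness_inj : injective witness.
Proof.
move=> i j /(congr1 (fun x => if x is tskolem _ r t then Inst r t else i)).
by case: i j => [? ? ?] [? ? ?].
Qed.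

Fixpoint depth (x : term) : nat :=
  if x is tskolem n r t then (\max_(k < n) depth (t k)).+1 else 0.

Lemma depth_witness i k : depth (inst_t i k) < depth (witness i).
Proof. by rewrite /= ltnS; apply: (leq_bigmax (F := fun k => depth (inst_t i k))). Qed.

Lemma witness_fresh i j k : depth (witness j) <= depth (witness i) -> inst_t j k <> witness i.
Proof. by move=> ji ek; have := leq_trans (depth_witness k) ji; rewrite ek ltnn. Qed.

Lemma max_depth_witness (I : seq inst) :
  I = [::] \/ exists2 i, List.In i I & forall j, List.In j I -> depth (witness j) <= depth (witness i).
Proof.
elim: I => [|i I [->|[k kI kmax]]]; [by left|right; exists i => [|j [<-|[]]]; by [left|]|right].
have [ik|ki] := leqP (depth (witness i)) (depth (witness k)).
  by exists k => [|j [<-|/kmax]]; [right|..].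
by exists i => [|j [<-|/kmax/leq_trans]]; [left|..|apply; apply: ltnW].
Qed.

Definition concls (I : seq inst) (b : inst -> bool) : set sent :=
  [set henkin_concl i | i in [set i | List.In i I /\ b i]].
Definition prems (I : seq inst) (b : inst -> bool) : set sent :=
  [set henkin_prem i | i in [set i | List.In i I /\ ~~ b i]].

(* Entailment modulo the Henkin axioms indexed by [I], each used by cases: branch [b] assumes
   the conclusion of [i] when [b i] and denies its premise otherwise. *)
Definition hentails (G D : set sent) :=
  exists I : seq inst, forall b, entails (G `|` concls I b) (D `|` prems I b).

Lemma entails_hentails (G D : set sent) : entails G D -> hentails G D.
Proof. by move=> GD; exists [::] => b; apply: entails_mono GD => f fG; left. Qed.

Lemma hentails_mono (G D G' D' : set sent) :
  G `<=` G' -> D `<=` D' -> hentails G D -> hentails G' D'.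
Proof.
move=> GG' DD' [I HI]; exists I => b; apply: entails_mono (HI b).
  by move=> f [/GG'|]; [left|right].
by move=> f [/DD'|]; [left|right].
Qed.

Lemma concls_sub (I I' : seq inst) b :
  (forall i, List.In i I -> List.In i I') -> concls I b `<=` concls I' b.
Proof. by move=> II' f [i [/II' iI' bi] <-]; exists i. Qed.

Lemma prems_sub (I I' : seq inst) b :
  (forall i, List.In i I -> List.In i I') -> prems I b `<=` prems I' b.
Proof. by move=> II' f [i [/II' iI' bi] <-]; exists i. Qed.

Lemma hentails_cut (G D : set sent) (f : sent) :
  hentails (G `|` [set f]) D -> hentails G (D `|` [set f]) -> hentails G D.
Proof.
move=> [I1 H1] [I2 H2]; exists (I1 ++ I2) => b.
have sub1 i : List.In i I1 -> List.In i (I1 ++ I2) by move=> ?; apply/List.in_app_iff; left.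
have sub2 i : List.In i I2 -> List.In i (I1 ++ I2) by move=> ?; apply/List.in_app_iff; right.
apply: (@entails_cut _ _ f).
  apply: entails_mono (H1 b).
    by move=> g [[Gg|->]|/(concls_sub sub1) c]; [left; left|right|left; right].
  by move=> g [Dg|/(prems_sub sub1) p]; [left|right].
apply: entails_mono (H2 b).
  by move=> g [Gg|/(concls_sub sub2) c]; [left|right].
by move=> g [[Dg|->]|/(prems_sub sub2) p]; [left; left|right|left; right].
Qed.

Lemma entails_branch (G D : set sent) (I I' : seq inst) (i : inst) :
  (forall j, List.In j I -> j = i \/ List.In j I') ->
  (forall b, entails (G `|` concls I b) (D `|` prems I b)) -> forall b,
  entails (G `|` concls I' b `|` [set henkin_concl i]) (D `|` prems I' b) /\
  entails (G `|` concls I' b) (D `|` prems I' b `|` [set henkin_prem i]).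
Proof.
move=> II' HI b; pose upd v j := if `[< j = i >] then v else b j.
have updE v j : List.In j I -> j = i /\ upd v j = v \/ List.In j I' /\ upd v j = b j.
  by rewrite /upd; case: asboolP => [|ji] /=; [left|right; case: (II' j) => // /ji].
split.
  apply: entails_mono (HI (upd true)) => f.
    case=> [Gf|[j [/(updE true) [[-> _]|[jI' ->]] bj] <-]]; [by left; left|by right|].
    by left; right; exists j.
  case=> [Df|[j [/(updE true) [[_ ->]|[jI' ->]] bj] <-]]; [by left|by []|].
  by right; exists j.
apply: entails_mono (HI (upd false)) => f.
  case=> [Gf|[j [/(updE false) [[_ ->]|[jI' ->]] bj] <-]]; [by left|by []|].
  by right; exists j.
case=> [Df|[j [/(updE false) [[-> _]|[jI' ->]] bj] <-]]; [by left; left|by right|].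
by left; right; exists j.
Qed.

Definition constant_sent (f : sent) := forall k, exists p l, sent_t f k = tconst p l.

(* The deepest witness occurs nowhere else, so its Henkin axiom can be eliminated. *)
Lemma hentails_entails (G D : set sent) :
  G `<=` constant_sent -> D `<=` constant_sent -> hentails G D -> entails G D.
Proof.
move=> cG cD [I]; have [N] := ubnP (size I); elim: N I => // N IHN I /ltnSE sizeI HI.
have [I0|[i iI imax]] := max_depth_witness I.
  by apply: entails_mono (HI xpredT) => f [//|[j []]]; rewrite I0.
pose I' := [seq j <- I | `[< j <> i >]].
have I'E j : List.In j I' -> List.In j I /\ j <> i by move/List.filter_In => [? /asboolP].
apply: (IHN I') => [|b].
  by apply: leq_trans sizeI; apply: (size_filter_In_lt iI); apply/negP => /asboolP.
have II' j : List.In j I -> j = i \/ List.In j I'.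
  have [->|ji] := pselect (j = i); [by left|right].
  by apply/List.filter_In; split; last exact/asboolP.
have [Hconcl Hprem] := entails_branch II' HI b.
have const_fresh f : constant_sent f -> forall k, sent_t f k <> witness i.
  by move=> cf k; case: (cf k) => p [l ->].
have fresh j k : List.In j I' -> inst_t j k <> witness i.
  by case/I'E=> /imax ji _; apply: witness_fresh.
apply: entails_cut Hprem; apply: (entails_pex_elim _ _ _ Hconcl).
- by move=> k; apply: witness_fresh.
- move=> f [/cG/const_fresh //|[j [jI' _] <-] k] /=.
  case: (unliftP ord_max k) => [k' ->|->]; rewrite ?snoc_lift ?snoc_max; first exact: fresh.
  by move/witness_inj => ji; case: (I'E j jI') => _ /(_ ji).
- by move=> f [/cD/const_fresh //|[j [jI' _] <-] k]; apply: fresh.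
Qed.

(** * The canonical model *)

Definition gap_const (p : gap) (l : 'I_(gap_n p)) : term := tconst p l.
Arguments gap_const : clear implicits.
Definition proper_gap (p : gap) := ~ gap_r p <=L gap_s p.

Definition asserted0 : set sent := [set Sent (gap_r p) (gap_const p) | p in proper_gap].
Definition denied0 : set sent := [set Sent (gap_s p) (gap_const p) | p in proper_gap].

Section GapBlocks.
Variables (ps : seq gap) (d : gap).
Local Notation ks := (map gap_n ps).

Lemma gap_block_proof (i : 'I_(size ks)) (l : 'I_(gap_n (nth d ps i))) :
  flatten_index ks i l < sumn ks.
Proof. by apply: flatten_indexP; rewrite (nth_map d) -?(size_map gap_n). Qed.

Definition gap_block (i : 'I_(size ks)) : {ffun 'I_(gap_n (nth d ps i)) -> 'I_(sumn ks)} :=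
  [ffun l => Ordinal (gap_block_proof l)].

Lemma gaps_split :
  \big[@pmeet L _/pone L _]_(i < size ks) psubst (gap_block i) (gap_r (nth d ps i)) <=L
  \big[@pjoin L _/pzero L _]_(i < size ks) psubst (gap_block i) (gap_s (nth d ps i)) ->
  exists i : 'I_(size ks), gap_r (nth d ps i) <=L gap_s (nth d ps i).
Proof.
have nE (i : 'I_(size ks)) : gap_n (nth d ps i) = nth 0 ks i.
  by rewrite (nth_map d) // -(size_map gap_n).
have castE n1 n2 (e : n1 = n2) k (a : {ffun 'I_n2 -> 'I_k}) (b : {ffun 'I_n1 -> 'I_k}) (x : S n1) :
    (forall l, val (a (cast_ord e l)) = val (b l)) -> psubst a (eq_rect n1 S x n2 e) = psubst b x.
  by case: n2 / e a => a ab; congr psubst; apply/ffunP => l; apply: val_inj; rewrite -ab cast_ord_id.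
pose r (i : 'I_(size ks)) := eq_rect _ S (gap_r (nth d ps i)) _ (nE i).
pose s (i : 'I_(size ks)) := eq_rect _ S (gap_s (nth d ps i)) _ (nE i).
have blockE (i : 'I_(size ks)) l : val (pcyl i (cast_ord (nE i) l)) = val (gap_block i l).
  by rewrite !ffunE /= addnC.
have rE i : psubst (pcyl i) (r i) = psubst (gap_block i) (gap_r (nth d ps i)).
  exact: castE (blockE i).
have sE i : psubst (pcyl i) (s i) = psubst (gap_block i) (gap_s (nth d ps i)).
  exact: castE (blockE i).
have castK n1 n2 (e : n1 = n2) (x y : S n1) : eq_rect _ S x _ e <=L eq_rect _ S y _ e -> x <=L y.
  by case: n2 / e.
move=> H; have [|i] := pcyl_split (r := r) (s := s); last by move/castK; exists i.
by rewrite (eq_bigr _ (fun i _ => rE i)) (eq_bigr _ (fun i _ => sE i)).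
Qed.

Lemma atom_gap_block m (z : 'I_m -> term) (s : 'I_m -> 'I_(sumn ks)) (p : atom m) (q : gap)
    (F : forall q : gap, S (gap_n q)) (i : 'I_(size ks)) :
  atom_sent z p = Sent (F q) (gap_const q) -> nth d ps i = q ->
  (forall j (l : 'I_(gap_n q)), z j = tconst q l -> val (s j) = flatten_index ks i l) ->
  psubst (finfun s) (atom_val p) = psubst (gap_block i) (F (nth d ps i)).
Proof.
case/atom_sentP=> a -> za iq sE; rewrite -psubst_comp.
have : forall l, val (gap_block i l) = flatten_index ks i l by move=> l; rewrite ffunE.
move: (gap_block i); rewrite iq => b bE.
by congr psubst; apply/ffunP => l; apply: val_inj; rewrite ffunE bE; apply: sE (za l).
Qed.

End GapBlocks.
Arguments gap_block : clear implicits.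

Section Nondegenerate.
Hypothesis nondeg : ~ pone L 1 <=L pzero L 1.

Definition gap_of (F : forall q, S (gap_n q)) (f : sent) : gap :=
  epsilon (inhabits (Gap (pone L 0) (pone L 0)))
    (fun q => proper_gap q /\ Sent (F q) (gap_const q) = f).

Lemma gap_ofP (F : forall q, S (gap_n q)) f :
  [set Sent (F q) (gap_const q) | q in proper_gap] f ->
  proper_gap (gap_of F f) /\ Sent (F (gap_of F f)) (gap_const (gap_of F f)) = f.
Proof.
by case=> q qp qf; apply: (epsilon_spec _ (fun q => proper_gap q /\ _ = f)); exists q.
Qed.

(* Send every Henkin constant of a gap to its position in the block of that gap; a refutation
   of the gaps then becomes an instance of axiom (0). *)
Lemma not_entails_gaps : ~ entails asserted0 denied0.
Proof.
move=> [m [z [gs [ds [hG hD le]]]]].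
pose dummy := Gap (pone L 1) (pzero L 1).
pose ps := dummy :: map (fun p => gap_of gap_r (atom_sent z p)) gs
                  ++ map (fun p => gap_of gap_s (atom_sent z p)) ds.
pose ks := map gap_n ps.
have proper_ps q : List.In q ps -> proper_gap q.
  case=> [<- //|/List.in_app_iff [] /List.in_map_iff [p [<-]]].
    by case/hG/gap_ofP.
  by case/hD/gap_ofP.
have ks0 : 0 < sumn ks by [].
pose d0 : 'I_(sumn ks) := Ordinal ks0.
pose sg j := if z j is tconst q l then insubd d0 (flatten_index ks (find_eq ps q) l) else d0.
have sgP (F : forall q, S (gap_n q)) p : List.In (gap_of F (atom_sent z p)) ps ->
    Sent (F (gap_of F (atom_sent z p))) (gap_const _) = atom_sent z p ->
    exists i, psubst (finfun sg) (atom_val p) = psubst (gap_block ps dummy i) (F (nth dummy ps i)).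
  set q := gap_of F _ => qps qp; have [iq nq] := find_eqP dummy qps.
  rewrite -(size_map gap_n) in iq.
  exists (Ordinal iq); apply: (atom_gap_block (F := F) (i := Ordinal iq) (esym qp) nq) => j l zj.
  rewrite /sg zj insubdK //; apply: flatten_indexP.
  by rewrite (nth_map dummy) ?nq // -(size_map gap_n).
have [|i] := @gaps_split ps dummy; last by apply: proper_ps; apply: In_nth; rewrite -(size_map gap_n).
apply: ple_trans (ple_trans (psubst_ple (finfun sg) le) _); rewrite ?psubst_meetl ?psubst_joinl.
  apply: plex_meetl => y /List.in_map_iff [_ [<- /List.in_map_iff [p [<- pgs]]]].
  have [qp qf] := gap_ofP (hG p pgs).
  have [|i ->] := sgP gap_r p _ qf; last exact: bigmeet_ple.
  by right; apply/List.in_app_iff; left; apply: (List.in_map (fun p => gap_of gap_r (atom_sent z p))).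
apply: pjoinl_lex => y /List.in_map_iff [_ [<- /List.in_map_iff [p [<- pds]]]].
have [qp qf] := gap_ofP (hD p pds).
have [|i ->] := sgP gap_s p _ qf; last exact: ple_bigjoin.
by right; apply/List.in_app_iff; right; apply: (List.in_map (fun p => gap_of gap_s (atom_sent z p))).
Qed.

Definition init (x : bool * sent) : Prop := if x.1 then asserted0 x.2 else denied0 x.2.

(* Consistency is stated for finite subsets, so that it is preserved by unions of chains. *)
Definition consistent (X : set (bool * sent)) :=
  forall lg ld : seq sent,
    (forall f, List.In f lg -> (init `|` X) (true, f)) ->
    (forall f, List.In f ld -> (init `|` X) (false, f)) ->
    ~ hentails [set f | List.In f lg] [set f | List.In f ld].

Lemma consistent0 : consistent set0.
Proof.
move=> lg ld hg hd hent; apply: not_entails_gaps.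
have const0 f : asserted0 f \/ denied0 f -> constant_sent f by case=> -[p _ <-] k; exists p, k.
apply: entails_mono (hentails_entails _ _ hent).
- by move=> f /hg [|[]].
- by move=> f /hd [|[]].
- by move=> f /hg [? |[]]; apply: const0; left.
- by move=> f /hd [? |[]]; apply: const0; right.
Qed.

Lemma chain_cover (T : Type) (F : set (set T)) (E : set T) (l : seq T) :
  total_on F subset -> (forall x, List.In x l -> (E `|` \bigcup_(X in F) X) x) ->
  exists2 Y, Y = set0 \/ F Y & forall x, List.In x l -> (E `|` Y) x.
Proof.
move=> Ftot; elim: l => [|x l IH] lF; first by exists set0; [left|].
have [Y FY Yl] := IH (fun y yl => lF y (or_intror yl)).
have [Ex|[X FX Xx]] := lF x (or_introl erefl).
  by exists Y => // y [<-|/Yl]; [left|].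
case: FY => [Y0|FY].
  by exists X; [right|move=> y [<-|/Yl]; rewrite ?Y0; [right|case=> [?|[]]; left]].
have [XY|YX] := Ftot X Y FX FY.
  by exists Y; [right|move=> y [<-|/Yl //]; right; apply: XY].
by exists X; [right|move=> y [<-|/Yl [?|/YX ?]]; [right|left|right]].
Qed.

Lemma consistent_bigcup (F : set (set (bool * sent))) :
  F `<=` consistent -> total_on F subset -> consistent (\bigcup_(X in F) X).
Proof.
move=> Fcons Ftot lg ld hg hd.
pose l := map (pair true) lg ++ map (pair false) ld.
have [|Y FY Yl] := chain_cover (E := init) (l := l) Ftot.
  move=> x /List.in_app_iff [] /List.in_map_iff [f [<-]]; [exact: hg|exact: hd].
have cY : consistent Y by case: FY => [->|/Fcons //]; apply: consistent0.
apply: cY => f fl; apply: Yl; apply/List.in_app_iff; [left|right]; exact: List.in_map.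
Qed.

Section Model.
Variable M : set (bool * sent).
Hypotheses (consM : consistent M) (maxM : forall B, M `<` B -> ~ consistent B).

Definition holds (f : sent) := (init `|` M) (true, f).
Definition fails (f : sent) := (init `|` M) (false, f).

Lemma holds_fails f : holds f -> fails f -> False.
Proof.
move=> hf ff; apply: (consM (lg := [:: f]) (ld := [:: f])) => [g [<-|[]]|g [<-|[]]|] //.
by apply: entails_hentails; apply: entails_mono (entails_refl f) => g <-; left.
Qed.

Lemma maximal_extend (b : bool) (f : sent) : ~ (init `|` M) (b, f) ->
  exists lg ld : seq sent,
    [/\ forall g, List.In g lg -> holds g, forall g, List.In g ld -> fails g &
        hentails ([set g | List.In g lg] `|` [set g | b /\ g = f])
                 ([set g | List.In g ld] `|` [set g | ~~ b /\ g = f])].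
Proof.
move=> nbf; apply: contrapT => nex; apply: (maxM (B := M `|` [set (b, f)])).
  by split=> [x Mx|/(_ (b, f)) sub]; [left|apply: nbf; right; apply: sub; right].
move=> lg ld hg hd hent; apply: nex.
exists [seq g <- lg | `[< holds g >]], [seq g <- ld | `[< fails g >]]; split.
- by move=> g /List.filter_In [_ /asboolP].
- by move=> g /List.filter_In [_ /asboolP].
apply: hentails_mono hent => g gl.
  have [hgg|[<- ->]] : holds g \/ (true, g) = (b, f).
    by case: (hg g gl) => [?|[?|?]]; [left; left|left; right|right].
    by left; apply/List.filter_In; split=> //; apply/asboolP.
  by right.
have [fgg|[<- ->]] : fails g \/ (false, g) = (b, f).
  by case: (hd g gl) => [?|[?|?]]; [left; left|left; right|right].
  by left; apply/List.filter_In; split=> //; apply/asboolP.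
by right.
Qed.

Lemma holds_or_fails f : holds f \/ fails f.
Proof.
apply: contrapT => /not_orP [nh nf].
have [lg1 [ld1 [hg1 hd1 H1]]] := maximal_extend nh.
have [lg2 [ld2 [hg2 hd2 H2]]] := maximal_extend nf.
apply: (consM (lg := lg1 ++ lg2) (ld := ld1 ++ ld2)).
- by move=> g /List.in_app_iff [/hg1|/hg2].
- by move=> g /List.in_app_iff [/hd1|/hd2].
apply: (@hentails_cut _ _ f).
  apply: hentails_mono H1 => g; last by case=> [gl|[]//]; apply/List.in_app_iff; left.
  by case=> [gl|[_ ->]]; [left; apply/List.in_app_iff; left|right].
apply: hentails_mono H2 => g; first by case=> [gl|[]//]; apply/List.in_app_iff; right.
by case=> [gl|[_ ->]]; [left; apply/List.in_app_iff; right|right].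
Qed.

Lemma holds_le m (z : 'I_m -> term) (gs ds : seq (atom m)) :
  meetl (map (@atom_val m) gs) <=L joinl (map (@atom_val m) ds) ->
  (forall g, List.In g gs -> holds (atom_sent z g)) ->
  exists2 d, List.In d ds & holds (atom_sent z d).
Proof.
move=> le hgs; apply: contrapT => nds.
apply: (consM (lg := map (atom_sent z) gs) (ld := map (atom_sent z) ds)).
- by move=> f /List.in_map_iff [g [<- /hgs]].
- move=> f /List.in_map_iff [d [<- dds]].
  by case: (holds_or_fails (atom_sent z d)) => [hd|//]; case: nds; exists d.
by apply: entails_hentails; apply: entails_atoms.
Qed.

Lemma holds_le_id n (x : 'I_n -> term) (rs ss : seq (S n)) :
  meetl rs <=L joinl ss -> (forall r, List.In r rs -> holds (Sent r x)) ->
  exists2 s, List.In s ss & holds (Sent s x).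
Proof.
have valE l : map (@atom_val n) (map (@atom_id n) l) = l.
  by rewrite -map_comp; under eq_map do rewrite /= atom_val_id; rewrite map_id.
move=> le hrs.
have le' : meetl (map (@atom_val n) (map (@atom_id n) rs))
            <=L joinl (map (@atom_val n) (map (@atom_id n) ss)).
  by rewrite !valE.
have hgs g : List.In g (map (@atom_id n) rs) -> holds (atom_sent x g).
  by move=> /List.in_map_iff [r [<- /hrs hr]]; apply: hr.
have [d /List.in_map_iff [s [<- sss]] hs] := holds_le le' hgs.
by exists s => //; apply: hs.
Qed.

Lemma holds_mono n (x : 'I_n -> term) (r s : S n) : r <=L s -> holds (Sent r x) -> holds (Sent s x).
Proof.
move=> rs hr; have le : meetl [:: r] <=L joinl [:: s] by rewrite /= pmeetx1 pjoinx0.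
have hrs r' : List.In r' [:: r] -> holds (Sent r' x) by case=> [<-|[]].
by have [_ [<-|[]]] := holds_le_id le hrs.
Qed.

Lemma holds_meet n (x : 'I_n -> term) (r s : S n) :
  holds (Sent r x) -> holds (Sent s x) -> holds (Sent (pmeet r s) x).
Proof.
move=> hr hs; have le : meetl [:: r; s] <=L joinl [:: pmeet r s].
  by rewrite /= pmeetx1 pjoinx0; apply: ple_refl.
have hrs r' : List.In r' [:: r; s] -> holds (Sent r' x) by case=> [<-|[<-|[]]].
by have [_ [<-|[]]] := holds_le_id le hrs.
Qed.

Lemma holds_join n (x : 'I_n -> term) (r s : S n) :
  holds (Sent (pjoin r s) x) -> holds (Sent r x) \/ holds (Sent s x).
Proof.
move=> hrs; have le : meetl [:: pjoin r s] <=L joinl [:: r; s].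
  by rewrite /= pmeetx1 pjoinx0; apply: ple_refl.
have hrs' r' : List.In r' [:: pjoin r s] -> holds (Sent r' x) by case=> [<-|[]].
by have [_ [<-|[<-|[]]] ?] := holds_le_id le hrs'; [left|right].
Qed.

Lemma holds_zero n (x : 'I_n -> term) : ~ holds (Sent (pzero L n) x).
Proof.
move=> h0; have le : meetl [:: pzero L n] <=L joinl [::] by rewrite /= pmeetx1; apply: ple_refl.
have h0' r' : List.In r' [:: pzero L n] -> holds (Sent r' x) by case=> [<-|[]].
by have [] := holds_le_id le h0'.
Qed.

Lemma holds_one n (x : 'I_n -> term) : holds (Sent (pone L n) x).
Proof.
have le : meetl [::] <=L joinl [:: pone L n] by rewrite /= pjoinx0; apply: ple_refl.
have nil r' : List.In r' [::] -> holds (Sent r' x) by [].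
by have [_ [<-|[]]] := holds_le_id le nil.
Qed.

Lemma holds_witness (i : inst) : holds (henkin_prem i) -> holds (henkin_concl i).
Proof.
move=> hp; have [//|fc] := holds_or_fails (henkin_concl i); exfalso.
apply: (consM (lg := [:: henkin_prem i]) (ld := [:: henkin_concl i])) => [g [<-|[]]|g [<-|[]]|] //.
exists [:: i] => b; case bi: (b i).
  apply: entails_mono (entails_refl (henkin_concl i)) => g ->; [right; exists i|left; left] => //.
  by split; [left|].
apply: entails_mono (entails_refl (henkin_prem i)) => g ->; [left; left|right; exists i] => //.
by split; [left|rewrite bi].
Qed.

Lemma holds_atom_le m (z : 'I_m -> term) (p q : atom m) :
  atom_val p <=L atom_val q -> holds (atom_sent z p) -> holds (atom_sent z q).
Proof.
move=> pq hp; have le : meetl (map (@atom_val m) [:: p]) <=L joinl (map (@atom_val m) [:: q]).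
  by rewrite /= pmeetx1 pjoinx0.
have hp' g : List.In g [:: p] -> holds (atom_sent z g) by case=> [<-|[]].
by have [_ [<-|[]]] := holds_le le hp'.
Qed.

Definition model n (r : S n) : psort (A term) n := fun x => holds (Sent r x).

Lemma model_hom : pe_hom model.
Proof.
split.
  move=> n k a r; apply: funext => x; apply: propext; rewrite /model /=.
  have aE : atom_val (Atom r (fun i => a i)) = atom_val (atom_id (psubst a r)).
    by rewrite atom_val_id /atom_val; congr psubst; apply/ffunP => i; rewrite ffunE.
  split; [apply: (holds_atom_le (p := atom_id _) (q := Atom r (fun i => a i)))
        |apply: (holds_atom_le (p := Atom r (fun i => a i)) (q := atom_id _))];
    by rewrite aE; apply: ple_refl.
split.
  by move=> n; apply: funext => x; apply: propext; split=> // /holds_zero.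
split.
  by move=> n; apply: funext => x; apply: propext; split=> // _; apply: holds_one.
split.
  move=> n r s; apply: funext => x; apply: propext; split; first exact: holds_join.
  by case; apply: holds_mono; [apply: pleUl|apply: pleUr].
split.
  move=> n r s; apply: funext => x; apply: propext; split; last by case; apply: holds_meet.
  by move=> h; split; apply: holds_mono h; [apply: pleIl|apply: pleIr].
move=> n r; apply: funext => x; apply: propext; split.
  by move/(@holds_witness (Inst r x)) => h; exists (witness (Inst r x)).
case=> y hy; rewrite -(snoc_cyl x y).
have cE : atom_val (atom_id r) <=L atom_val (Atom (pex r) (fun i => cyl n i)).
  by rewrite atom_val_id /atom_val ffun_cyl; apply: ple_cyl_pex.
exact: (holds_atom_le (z := snoc x y) cE hy).
Qed.

Lemma model_inj n : injective (@model n).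
Proof.
suff sep (r s : S n) : ~ r <=L s -> model r <> model s.
  move=> r s e; apply: contrapT => ne; have [rs|nrs] := pselect (r <=L s); last exact: sep nrs e.
  by apply: (sep s r) (esym e) => sr; apply: ne; apply: ple_anti.
move=> nrs e; pose p := Gap r s.
have hr : holds (Sent r (gap_const p)) by left; exists p.
have fs : fails (Sent s (gap_const p)) by left; exists p.
have hs : model s (gap_const p) by rewrite -e.
exact: holds_fails hs fs.
Qed.

End Model.

Lemma embeds_nondegenerate : embeds_in_A L.
Proof.
have [M [consM maxM]] := Zorn_bigcup consistent_bigcup.
by exists term, (model M); split; [apply: model_hom|apply: model_inj].
Qed.

End Nondegenerate.

(** * The degenerate case *)

Lemma pzero0_neq_pone : pzero L 0 <> pone L 0.
Proof.
move=> e; have [|[]] // := @gaps_split [::] (Gap (pone L 0) (pzero L 0)).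
by rewrite !big_ord0 /= -e; apply: ple_refl.
Qed.

Lemma psubst0E (a : {ffun 'I_0 -> 'I_0}) (r : S 0) : psubst a r = r.
Proof. by rewrite -[a]ffunK; apply: psubst_id => -[]. Qed.

Lemma sort0_two_valued (r : S 0) : r = pone L 0 \/ r = pzero L 0.
Proof.
pose ps := [:: Gap (pone L 0) r; Gap r (pzero L 0)].
have [|[[|[|//]] i] /= le] := @gaps_split ps (Gap r r).
  rewrite !big_ord_recl !big_ord0 /= !psubst0E.
  change (pmeet (pone L 0) (pmeet r (pone L 0)) <=L pjoin r (pjoin (pzero L 0) (pzero L 0))).
  by rewrite !pmeetx1 !pjoinx0 pmeetC pmeetx1; apply: ple_refl.
  by left; apply: ple_anti (plex1 _) le.
by right; apply: ple_anti le (ple0x _).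
Qed.

Section Degenerate.
Hypothesis deg : pone L 1 <=L pzero L 1.

Lemma degenerate_sortS n (x : S n.+1) : x = pzero L n.+1.
Proof.
pose a : {ffun 'I_1 -> 'I_n.+1} := [ffun => ord0].
have one_zero : pone L n.+1 <=L pzero L n.+1.
  by rewrite -(psubst1 a) -(psubst0 a); apply: psubst_ple.
exact: ple_anti (ple_trans (plex1 x) one_zero) (ple0x x).
Qed.

Lemma A_False_sortS n (P Q : psort (A False) n.+1) : P = Q.
Proof. by apply: funext => x; case: (x ord0). Qed.

Definition model0 n (r : S n) : psort (A False) n := fun _ => r = pone L n.

Lemma model0_hom : pe_hom model0.
Proof.
split.
  move=> n [|k] a r; last exact: A_False_sortS.
  case: n a r => [|n] a r; last by case: (a ord0).
  by rewrite psubst0E; apply: funext => x /=; congr (_ = _); apply: funext => -[].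
split.
  case=> [|n]; last exact: A_False_sortS.
  by apply: funext => x; apply: propext; split=> // /pzero0_neq_pone.
split.
  by case=> [|n]; last exact: A_False_sortS; apply: funext => x; apply: propext.
split.
  case=> [|n] r s; last exact: A_False_sortS.
  apply: funext => x; apply: propext => /=.
  case: (sort0_two_valued r) => ->; case: (sort0_two_valued s) => ->;
    rewrite ?pjoinxx ?pjoinx0 1?pjoinC ?pjoinx0; by intuition.
split.
  case=> [|n] r s; last exact: A_False_sortS.
  apply: funext => x; apply: propext => /=.
  case: (sort0_two_valued r) => ->; case: (sort0_two_valued s) => ->;
    rewrite ?pmeetxx ?pmeetx1 1?pmeetC ?pmeetx1; by intuition.
case=> [|n] r; last exact: A_False_sortS.
apply: funext => x; apply: propext => /=.
by rewrite (degenerate_sortS r) pex0; split=> [/pzero0_neq_pone|[]].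
Qed.

Lemma model0_inj n : injective (@model0 n).
Proof.
case: n => [|n] r s; last by rewrite (degenerate_sortS r) (degenerate_sortS s).
have x0 : 'I_0 -> False by case.
move=> /(congr1 (fun P => P x0)); rewrite /model0.
case: (sort0_two_valued r) => ->; case: (sort0_two_valued s) => -> // e;
  by exfalso; apply: pzero0_neq_pone; rewrite ?e // -e.
Qed.

Lemma embeds_degenerate : embeds_in_A L.
Proof. by exists False, model0; split; [apply: model0_hom|apply: model0_inj]. Qed.

End Degenerate.

End Completeness.

Theorem theorem4p4 (L : peAlg) : pe_axioms L <-> embeds_in_A L.
Proof.
split=> [HL|[W [h [hom_h inj_h]]]].
  have [deg|nondeg] := pselect (ple (pone L 1) (pzero L 1)).
    exact: embeds_degenerate.
  exact: embeds_nondegenerate.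
exact: pe_axioms_embedding hom_h inj_h (A_pe_axioms W).
Qed.
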